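(* Let $G$ be a group and $S\subset G$ a symmetric generating set containing the identity. (1) If $S$ is a determining set, then for any closed $S$-curve $\gamma_0$ based at $e$ there is a sequence $\gamma_1,\dots,\gamma_n$ of closed $S$-curves based at $e$ with $d_U^S(\gamma_{j-1},\gamma_j)\leq1$ for each $j\in\{1,\dots,n\}$ and $\gamma_n=(e)$. (2) If $N\in\mathbb{N}$ is such that for each closed $S$-curve $\gamma_0$ based at $e$ there is a sequence of closed $S$-curves $\gamma_1,\dots,\gamma_n$ based at $e$ with $d_U^S(\gamma_{j-1},\gamma_j)\leq N$ for each $j$ and $\gamma_n=(e)$, then $S^{N+1}$ is a determining set.
   Context: $S^k:=\{s_1\cdots s_k: s_j\in S\}$. A generating subset $S$ containing the identity is a determining set if $G$ has a presentation $\langle S\mid\mathcal{R}\rangle$ where every relator is a word of length $3$ in the letters $S\cup S^{-1}$. An $S$-curve is a finite sequence $(g_0,\dots,g_n)$ in $G$ with $g_{j-1}^{-1}g_j\in S$ for all $j$; it is closed based at $g_0$ if $g_0=g_n$. For $S$-curves $g=(g_0,\dots,g_n)$, $h=(h_0,\dots,h_m)$, $d_U^S(g,h)$ is the infimum of $r\in\mathbb{N}$ for which there is a relation $R\subset\{0,\dots,n\}\times\{0,\dots,m\}$ such that every $i\in\{0,\dots,n\}$ and every $j\in\{0,\dots,m\}$ appear in some pair of $R$; if $(i_1,j_1),(i_2,j_2)\in R$ and $i_1<i_2$ then $j_1\leq j_2$; and $g_i^{-1}h_j\in S^r$ for all $(i,j)\in R$. *)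

From Stdlib Require Import List Arith Lia.
Import ListNotations.

Record Group := {
  carrier :> Type;
  gmul : carrier -> carrier -> carrier;
  ginv : carrier -> carrier;
  gone : carrier;
  gmul_assoc : forall x y z, gmul x (gmul y z) = gmul (gmul x y) z;
  gmul_1l : forall x, gmul gone x = x;
  gmul_Vl : forall x, gmul (ginv x) x = gone
}.

Arguments gmul {g}.
Arguments ginv {g}.
Arguments gone {g}.

Section Defs.
Variable G : Group.

Definition symmetric (X : G -> Prop) : Prop := forall x, X x -> X (ginv x).

Fixpoint Spow (X : G -> Prop) (k : nat) : G -> Prop :=
  match k with
  | O => fun g => g = gone
  | Datatypes.S k' => fun g => exists a b, X a /\ Spow X k' b /\ g = gmul a b
  end.

(* Letters of S ∪ S^{-1}: (x, false) stands for x, (x, true) for x^{-1}. *)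
Definition letter := (G * bool)%type.
Definition eval_letter (l : letter) : G :=
  if snd l then ginv (fst l) else fst l.
Definition eval (w : list letter) : G :=
  fold_right (fun l acc => gmul (eval_letter l) acc) gone w.
Definition word_over (X : G -> Prop) (w : list letter) : Prop :=
  forall l, In l w -> X (fst l).

Definition generates (X : G -> Prop) : Prop :=
  forall g : G, exists w, word_over X w /\ eval w = g.

(* Equality in the group <X | R>: the congruence on words over X generated by
   free cancellation and the relators R (i.e. equality in F(X)/<<R>>). *)
Inductive wequiv (X : G -> Prop) (R : list letter -> Prop) :
    list letter -> list letter -> Prop :=
| weq_refl w : wequiv X R w w
| weq_sym u v : wequiv X R u v -> wequiv X R v u
| weq_trans u v w : wequiv X R u v -> wequiv X R v w -> wequiv X R u w
| weq_cancel u v x b : X x ->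
    wequiv X R (u ++ (x, b) :: (x, negb b) :: v) (u ++ v)
| weq_rel u v r : R r -> wequiv X R (u ++ r ++ v) (u ++ v).

(* G has the presentation <X | R> (via the tautological map X -> G). *)
Definition presents (X : G -> Prop) (R : list letter -> Prop) : Prop :=
  generates X /\
  (forall r, R r -> word_over X r /\ eval r = gone) /\
  (forall w, word_over X w -> eval w = gone -> wequiv X R w []).

Definition determining (X : G -> Prop) : Prop :=
  X gone /\ generates X /\
  exists R : list letter -> Prop,
    (forall r, R r -> length r = 3) /\ presents X R.

(* X-curves (g_0, ..., g_n), n >= 0, represented as nonempty lists. *)
Definition is_curve (X : G -> Prop) (c : list G) : Prop :=
  c <> [] /\
  forall j, 0 < j < length c ->
    X (gmul (ginv (nth (j - 1) c gone)) (nth j c gone)).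

Definition closed_curve_at_e (X : G -> Prop) (c : list G) : Prop :=
  is_curve X c /\ nth 0 c gone = gone /\ last c gone = gone.

(* d_U^X(g, h) <= N : the infimum over r in N of admissible r is at most N,
   i.e. some admissible r <= N exists. *)
Definition dU_le (X : G -> Prop) (g h : list G) (N : nat) : Prop :=
  exists r, r <= N /\
  exists Rel : nat -> nat -> Prop,
    (forall i j, Rel i j -> i < length g /\ j < length h) /\
    (forall i, i < length g -> exists j, Rel i j) /\
    (forall j, j < length h -> exists i, Rel i j) /\
    (forall i1 j1 i2 j2, Rel i1 j1 -> Rel i2 j2 -> i1 < i2 -> j1 <= j2) /\
    (forall i j, Rel i j ->
       Spow X r (gmul (ginv (nth i g gone)) (nth j h gone))).

Definition contractible (X : G -> Prop) (N : nat) (c0 : list G) : Prop :=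
  exists cs : list (list G),
    (forall c, In c cs -> closed_curve_at_e X c) /\
    (forall k, k < length cs ->
       dU_le X (nth k (c0 :: cs) []) (nth (Datatypes.S k) (c0 :: cs) []) N) /\
    last (c0 :: cs) [] = [gone].

End Defs.

Arguments symmetric {G}.
Arguments Spow {G}.
Arguments determining {G}.
Arguments closed_curve_at_e {G}.
Arguments contractible {G}.
Arguments generates {G}.

(* (1) A relation of the presentation cancels a pair of letters x x^-1 or deletes a
   relator of length 3.  On the closed curve traced by a word, this removes a detour of
   at most three steps, each of whose points is one S-step away from the point where the
   detour starts; collapsing the detour onto that point moves the curve by d_U <= 1.
   Reducing the word of a closed S-curve to the empty word therefore contracts the curve
   to (e) through such moves.

   (2) Take X = S^(N+1) and, as relators, all words of length 3 over X that evaluate to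
   e.  Modulo these, a word over X equals the word of an S-curve (split each letter into
   at most N+1 letters of S).  If two closed S-curves c and d are at d_U-distance at most
   N, the monotone correspondence between their points is a ladder cut into triangles
   whose sides are steps c_i -> c_(i+1) and d_j -> d_(j+1) (in S), rungs c_i -> d_j (in
   S^N) and diagonals c_i -> d_(j+1) (in S^(N+1)), so the words of c and d agree modulo
   the relators.  Following a contraction of a closed curve down to (e) shows that
   every relation of G follows from them. *)

From Stdlib Require Import List Arith Lia.
Import ListNotations.

Arguments eval {G} _.
Arguments eval_letter {G} _.
Arguments word_over {G} _ _.
Arguments is_curve {G} _ _.
Arguments dU_le {G} _ _ _ _.
Arguments wequiv {G} _ _ _ _.
Arguments weq_refl {G X R} w.
Arguments weq_sym {G X R u v} _.
Arguments weq_trans {G X R u} v {w} _ _.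
Arguments weq_cancel {G X R} u v {x} b _.
Arguments weq_rel {G X R} u v {r} _.

Section ListFacts.
Context {A : Type}.

Lemma last_cons (a b : A) q : last (b :: q) a = last q b.
Proof.
  revert a b. induction q as [|c q IH]; intros a b; [reflexivity|].
  change (last (c :: q) a = last (c :: q) b). rewrite !IH. reflexivity.
Qed.

Lemma last_app (a : A) q1 q2 : last (q1 ++ q2) a = last q2 (last q1 a).
Proof.
  revert a. induction q1 as [|b q1 IH]; intro a; [reflexivity|].
  rewrite <- app_comm_cons, !last_cons. apply IH.
Qed.

Lemma nth_length_cons (a d : A) q : nth (length q) (a :: q) d = last q a.
Proof.
  revert a. induction q as [|b q IH]; intro a; [reflexivity|].
  rewrite last_cons. apply IH.
Qed.

Lemma last_nth (d : A) l : last l d = nth (length l - 1) l d.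
Proof.
  destruct l as [|b l]; [reflexivity|].
  rewrite last_cons, <- nth_length_cons with (d := d). simpl. rewrite Nat.sub_0_r. reflexivity.
Qed.

End ListFacts.

Section GroupFacts.
Context {G : Group}.
Implicit Types a b c x y : G.

Lemma gmulK a b : gmul (ginv a) (gmul a b) = b.
Proof. rewrite gmul_assoc, gmul_Vl, gmul_1l. reflexivity. Qed.

Lemma gmul_Vr x : gmul x (ginv x) = gone.
Proof.
  rewrite <- (gmul_1l _ (gmul x (ginv x))), <- (gmul_Vl _ (ginv x)) at 1.
  rewrite <- gmul_assoc, (gmul_assoc _ (ginv x) x), gmul_Vl, gmul_1l, gmul_Vl.
  reflexivity.
Qed.

Lemma gmul_1r x : gmul x gone = x.
Proof. rewrite <- (gmul_Vl _ x), gmul_assoc, gmul_Vr, gmul_1l. reflexivity. Qed.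

Lemma gmulVK a b : gmul a (gmul (ginv a) b) = b.
Proof. rewrite gmul_assoc, gmul_Vr, gmul_1l. reflexivity. Qed.

Lemma ginv_unique x y : gmul x y = gone -> x = ginv y.
Proof.
  intro Hxy. rewrite <- (gmul_1r x), <- (gmul_Vr y), gmul_assoc, Hxy, gmul_1l. reflexivity.
Qed.

Lemma ginvK x : ginv (ginv x) = x.
Proof. symmetry. apply ginv_unique, gmul_Vr. Qed.

Lemma ginvM a b : ginv (gmul a b) = gmul (ginv b) (ginv a).
Proof. symmetry. apply ginv_unique. rewrite <- gmul_assoc, gmulK. apply gmul_Vl. Qed.

Lemma ginv1 : ginv (@gone G) = gone.
Proof. symmetry. apply ginv_unique, gmul_1l. Qed.

Lemma gmul_telescope a b c : gmul (gmul (ginv a) b) (gmul (ginv b) c) = gmul (ginv a) c.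
Proof. rewrite <- gmul_assoc, gmulVK. reflexivity. Qed.

Lemma ginv_mulV a b : gmul (ginv (gmul a b)) a = ginv b.
Proof. rewrite ginvM, <- gmul_assoc, gmul_Vl, gmul_1r. reflexivity. Qed.

End GroupFacts.

Section Powers.
Context {G : Group}.
Variable S : G -> Prop.
Hypothesis HSe : S gone.

Lemma Spow_1 x : S x -> Spow S 1 x.
Proof. intro Hx. exists x, gone. simpl. rewrite gmul_1r. auto. Qed.

Lemma Spow_S k x : Spow S k x -> Spow S (Datatypes.S k) x.
Proof.
  revert x. induction k as [|k IH]; intros x Hx.
  - exists gone, gone. simpl in *. subst. rewrite gmul_1l. auto.
  - destruct Hx as (a & b & Ha & Hb & ->). exists a, b. auto.
Qed.

Lemma Spow_le k m x : k <= m -> Spow S k x -> Spow S m x.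
Proof. induction 1; auto using Spow_S. Qed.

Lemma Spow_gone k : Spow S k gone.
Proof. apply (Spow_le 0); [lia | reflexivity]. Qed.

Lemma Spow_mulr k b s : Spow S k b -> S s -> Spow S (Datatypes.S k) (gmul b s).
Proof.
  revert b. induction k as [|k IH]; intros b Hb Hs.
  - simpl in Hb. subst. rewrite gmul_1l. apply Spow_1, Hs.
  - destruct Hb as (a & b' & Ha & Hb' & ->). exists a, (gmul b' s).
    rewrite gmul_assoc. auto.
Qed.

Lemma Spow_inv k x : symmetric S -> Spow S k x -> Spow S k (ginv x).
Proof.
  intro Hsym. revert x. induction k as [|k IH]; intros x Hx.
  - simpl in *. subst. apply ginv1.
  - destruct Hx as (a & b & Ha & Hb & ->). rewrite ginvM. apply Spow_mulr; auto.
Qed.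

End Powers.

Section Words.
Context {G : Group}.
Implicit Types (u v w : list (letter G)) (X : G -> Prop).

Lemma eval_app u w : eval (u ++ w) = gmul (eval u) (eval w).
Proof.
  induction u as [|l u IH]; simpl.
  - rewrite gmul_1l. reflexivity.
  - rewrite IH, gmul_assoc. reflexivity.
Qed.

Lemma word_over_app X u w : word_over X (u ++ w) <-> word_over X u /\ word_over X w.
Proof.
  unfold word_over. setoid_rewrite in_app_iff. firstorder.
Qed.

Lemma word_over_cons X l w : word_over X (l :: w) <-> X (fst l) /\ word_over X w.
Proof. unfold word_over. simpl. firstorder congruence. Qed.

Lemma eval_letter_in X (l : letter G) :
  symmetric X -> X (fst l) -> X (eval_letter l) /\ X (ginv (eval_letter l)).
Proof.
  intros Hsym Hl. destruct l as [x []]; unfold eval_letter; simpl in *;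
    rewrite ?ginvK; auto.
Qed.

Lemma wequiv_app X R u u' v v' :
  wequiv X R u u' -> wequiv X R v v' -> wequiv X R (u ++ v) (u' ++ v').
Proof.
  assert (Hctx : forall pre post w1 w2, wequiv X R w1 w2 ->
                   wequiv X R (pre ++ w1 ++ post) (pre ++ w2 ++ post)).
  { intros pre post.
    induction 1 as [w|w1 w2 _ IH|w1 w2 w3 _ IH1 _ IH2|w1 w2 x b Hx|w1 w2 r Hr].
    - apply weq_refl.
    - apply weq_sym, IH.
    - exact (weq_trans _ IH1 IH2).
    - pose proof (weq_cancel (R := R) (pre ++ w1) (w2 ++ post) b Hx) as Hc.
      rewrite <- !app_assoc in *. exact Hc.
    - pose proof (weq_rel (X := X) (pre ++ w1) (w2 ++ post) Hr) as Hc.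
      rewrite <- !app_assoc in *. exact Hc. }
  intros Hu Hv. apply weq_trans with (u' ++ v).
  - pose proof (Hctx [] v u u' Hu) as H. exact H.
  - pose proof (Hctx u' [] v v' Hv) as H. rewrite !app_nil_r in H. exact H.
Qed.

Lemma wequiv_sound X R u v :
  (forall r, R r -> word_over X r /\ eval r = gone) ->
  wequiv X R u v -> (word_over X u <-> word_over X v) /\ eval u = eval v.
Proof.
  intros HR. induction 1 as [w|u v _ [IHw IHe]|u v w _ [IHw1 IHe1] _ [IHw2 IHe2]
                           |u v x b Hx|u v r Hr].
  - tauto.
  - split; [tauto | congruence].
  - split; [tauto | congruence].
  - rewrite !word_over_app, !word_over_cons, !eval_app. simpl. split; [tauto|].
    f_equal. rewrite gmul_assoc.
    destruct b; unfold eval_letter; simpl; rewrite ?gmul_Vl, ?gmul_Vr, gmul_1l; reflexivity.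
  - destruct (HR r Hr) as [Hrw Hre].
    rewrite !word_over_app, !eval_app, Hre, gmul_1l. tauto.
Qed.

Definition triangles X (r : list (letter G)) : Prop :=
  length r = 3 /\ word_over X r /\ eval r = gone.

Lemma wequiv_triangle X x y z :
  X x -> X y -> X z -> gmul x y = z ->
  wequiv X (triangles X) [(x, false); (y, false)] [(z, false)].
Proof.
  intros Hx Hy Hz Hxyz.
  apply weq_trans with ([(x, false); (y, false); (z, true)] ++ [(z, false)]).
  - apply weq_sym. exact (weq_cancel [(x, false); (y, false)] [] true Hz).
  - apply (weq_rel [] [(z, false)] (r := [(x, false); (y, false); (z, true)])).
    repeat split.
    + intros l Hl. simpl in Hl. destruct Hl as [<-|[<-|[<-|[]]]]; assumption.
    + unfold eval, eval_letter. simpl. rewrite gmul_1r, gmul_assoc, Hxyz. apply gmul_Vr.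
Qed.

Lemma wequiv_gone X :
  X gone -> wequiv X (triangles X) [(gone, false)] [].
Proof.
  intro He. apply weq_trans with ([(gone, false); (gone, false); (gone, true)] ++ []).
  - apply weq_sym. exact (weq_cancel [(gone, false)] [] false He).
  - apply (weq_rel [] [] (r := [(gone, false); (gone, false); (gone, true)])).
    repeat split.
    + intros l Hl. simpl in Hl. destruct Hl as [<-|[<-|[<-|[]]]]; assumption.
    + unfold eval, eval_letter. simpl. rewrite gmul_1r, ginv1, !gmul_1l. reflexivity.
Qed.

Lemma wequiv_inv_letter X x :
  X gone -> X x -> X (ginv x) ->
  wequiv X (triangles X) [(x, true)] [(ginv x, false)].
Proof.
  intros He Hx Hxi. apply weq_sym.
  apply weq_trans with ([(ginv x, false); (x, false)] ++ [(x, true)]).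
  - apply weq_sym. exact (weq_cancel [(ginv x, false)] [] false Hx).
  - apply weq_trans with ([(gone, false)] ++ [(x, true)]).
    + apply wequiv_app; [apply wequiv_triangle, gmul_Vl | apply weq_refl]; assumption.
    + apply (wequiv_app _ _ _ [] _ _ (wequiv_gone X He)), weq_refl.
Qed.

End Words.

Section Traces.
Context {G : Group}.
Implicit Types (a b : G) (q : list G) (u w : list (letter G)).

Fixpoint trace a w : list G :=
  match w with
  | [] => []
  | l :: w' => gmul a (eval_letter l) :: trace (gmul a (eval_letter l)) w'
  end.

Definition step a b : letter G := (gmul (ginv a) b, false).

Fixpoint increments a q : list (letter G) :=
  match q with
  | [] => []
  | b :: q' => step a b :: increments b q'
  end.

Definition curve_word (c : list G) : list (letter G) :=
  match c with
  | [] => []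
  | a :: q => increments a q
  end.

Lemma length_increments a q : length (increments a q) = length q.
Proof. revert a. induction q as [|b q IH]; intro a; simpl; auto. Qed.

Lemma trace_app a u w : trace a (u ++ w) = trace a u ++ trace (gmul a (eval u)) w.
Proof.
  revert a. induction u as [|l u IH]; intro a; simpl.
  - rewrite gmul_1r. reflexivity.
  - rewrite IH, gmul_assoc. reflexivity.
Qed.

Lemma last_trace a w : last (trace a w) a = gmul a (eval w).
Proof.
  revert a. induction w as [|l w IH]; intro a.
  - symmetry. apply gmul_1r.
  - simpl trace. rewrite last_cons, IH. symmetry. apply gmul_assoc.
Qed.

Lemma trace_increments a q : trace a (increments a q) = q.
Proof.
  revert a. induction q as [|b q IH]; intro a; [reflexivity|].
  simpl. unfold eval_letter; simpl. rewrite gmulVK, IH. reflexivity.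
Qed.

Lemma eval_increments a q : eval (increments a q) = gmul (ginv a) (last q a).
Proof.
  revert a. induction q as [|b q IH]; intro a.
  - symmetry. apply gmul_Vl.
  - change (gmul (gmul (ginv a) b) (eval (increments b q)) = gmul (ginv a) (last (b :: q) a)).
    rewrite IH, last_cons. apply gmul_telescope.
Qed.

Lemma increments_app a q1 q2 :
  increments a (q1 ++ q2) = increments a q1 ++ increments (last q1 a) q2.
Proof.
  revert a. induction q1 as [|b q1 IH]; intro a; [reflexivity|].
  change (step a b :: increments b (q1 ++ q2) =
          (step a b :: increments b q1) ++ increments (last (b :: q1) a) q2).
  rewrite IH, last_cons. reflexivity.
Qed.

Lemma firstn_increments_S a q i : i < length q ->
  firstn (Datatypes.S i) (increments a q) =
  firstn i (increments a q) ++ [step (nth i (a :: q) gone) (nth (Datatypes.S i) (a :: q) gone)].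
Proof.
  revert a i. induction q as [|b q IH]; intros a i Hi; simpl in Hi; [lia|].
  destruct i as [|i]; [reflexivity|].
  simpl increments. rewrite !firstn_cons, IH by lia. reflexivity.
Qed.

End Traces.

Section Paths.
Context {G : Group}.
Variable S : G -> Prop.
Implicit Types (a b : G) (q : list G) (w : list (letter G)).

Fixpoint path_in a q : Prop :=
  match q with
  | [] => True
  | b :: q' => S (gmul (ginv a) b) /\ path_in b q'
  end.

Lemma path_in_app a q1 q2 :
  path_in a q1 -> path_in (last q1 a) q2 -> path_in a (q1 ++ q2).
Proof.
  revert a. induction q1 as [|b q1 IH]; intros a H1 H2; [exact H2|].
  destruct H1 as [Hb H1]. split; [exact Hb|]. apply IH; [exact H1|].
  rewrite <- (last_cons a). exact H2.
Qed.

Lemma path_in_nth a q : path_in a q <->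
  forall i, i < length q ->
    S (gmul (ginv (nth i (a :: q) gone)) (nth (Datatypes.S i) (a :: q) gone)).
Proof.
  revert a. induction q as [|b q IH]; intro a; simpl.
  - split; [intros _ i Hi; lia | trivial].
  - rewrite IH. split.
    + intros [Hb Hq] [|i] Hi; [exact Hb | apply Hq; lia].
    + intro H. split; [apply (H 0); lia | intros i Hi; apply (H (Datatypes.S i)); lia].
Qed.

Lemma is_curve_path_in a q : is_curve S (a :: q) <-> path_in a q.
Proof.
  rewrite path_in_nth. unfold is_curve. split.
  - intros [_ H] i Hi. specialize (H (Datatypes.S i)).
    replace (Datatypes.S i - 1) with i in H by lia. apply H. simpl. lia.
  - intro H. split; [discriminate|]. intros [|j] Hj; [lia|].
    replace (Datatypes.S j - 1) with j by lia. apply H. simpl in Hj. lia.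
Qed.

Lemma path_in_trace a w : symmetric S -> word_over S w -> path_in a (trace a w).
Proof.
  intro Hsym. revert a. induction w as [|l w IH]; intros a Hw; [exact I|].
  apply word_over_cons in Hw as [Hl Hw]. split.
  - rewrite gmulK. apply eval_letter_in; assumption.
  - apply IH, Hw.
Qed.

Lemma word_over_increments a q : path_in a q -> word_over S (increments a q).
Proof.
  revert a. induction q as [|b q IH]; intros a Hq; [intros l []|].
  destruct Hq as [Hb Hq]. apply word_over_cons. split; [exact Hb | apply IH, Hq].
Qed.

Definition loop_of_word w : list G := gone :: trace gone w.

Lemma loop_of_word_closed w : symmetric S -> word_over S w -> eval w = gone ->
  closed_curve_at_e S (loop_of_word w).
Proof.
  intros Hsym Hw He. split; [|split].
  - apply is_curve_path_in, path_in_trace; assumption.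
  - reflexivity.
  - unfold loop_of_word. rewrite last_cons, last_trace, He. apply gmul_1l.
Qed.

End Paths.

Section Correspondences.
Implicit Types (Rel : nat -> nat -> Prop) (n m : nat).

Definition correspondence Rel n m : Prop :=
  (forall i j, Rel i j -> i < n /\ j < m) /\
  (forall i, i < n -> exists j, Rel i j) /\
  (forall j, j < m -> exists i, Rel i j) /\
  (forall i1 j1 i2 j2, Rel i1 j1 -> Rel i2 j2 -> i1 < i2 -> j1 <= j2).

Lemma correspondence_flip Rel n m :
  correspondence Rel n m -> correspondence (fun j i => Rel i j) m n.
Proof.
  intros (Hb & Hl & Hr & Hm). split; [|split; [|split]].
  - intros j i Hij. apply Hb in Hij. tauto.
  - exact Hr.
  - exact Hl.
  - intros j1 i1 j2 i2 H1 H2 Hj.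
    destruct (Nat.le_gt_cases i1 i2) as [|Hi]; [assumption|].
    specialize (Hm _ _ _ _ H2 H1 Hi). lia.
Qed.

Lemma correspondence_graph n m (f : nat -> nat) :
  (forall i, i < n -> f i < m) ->
  (forall j, j < m -> exists i, i < n /\ f i = j) ->
  (forall i1 i2, i1 < i2 -> i2 < n -> f i1 <= f i2) ->
  correspondence (fun i j => i < n /\ j = f i) n m.
Proof.
  intros Hb Hs Hm. split; [|split; [|split]].
  - intros i j [Hi ->]. auto.
  - intros i Hi. exists (f i). auto.
  - intros j Hj. destruct (Hs j Hj) as (i & Hi & <-). exists i. auto.
  - intros i1 j1 i2 j2 [_ ->] [H2 ->] Hlt. auto.
Qed.

Lemma correspondence_last Rel n m : correspondence Rel (S n) (S m) -> Rel n m.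
Proof.
  intros (Hb & Hl & Hr & Hm).
  destruct (Hl n) as [j Hj]; [lia|].
  destruct (Nat.eq_dec j m) as [<-|Hjm]; [exact Hj|].
  destruct (Hr m) as [i Hi]; [lia|].
  destruct (Nat.eq_dec i n) as [<-|Hin]; [exact Hi|].
  pose proof (Hb _ _ Hi). pose proof (Hb _ _ Hj).
  specialize (Hm _ _ _ _ Hi Hj). lia.
Qed.

Lemma correspondence_pred Rel n m i j : correspondence Rel n m ->
  Rel i j -> 0 < i + j ->
  (exists i', i = S i' /\ Rel i' j) \/
  (exists j', j = S j' /\ Rel i j') \/
  (exists i' j', i = S i' /\ j = S j' /\ Rel i' j').
Proof.
  intros (Hb & Hl & Hr & Hm) Hij Hpos.
  pose proof (Hb _ _ Hij) as [Hi Hj].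
  assert (Hanti : forall i1 j1 i2 j2, Rel i1 j1 -> Rel i2 j2 -> j2 < j1 -> i2 <= i1).
  { intros i1 j1 i2 j2 H1 H2 Hlt. destruct (Nat.le_gt_cases i2 i1) as [|Hgt]; [assumption|].
    specialize (Hm _ _ _ _ H1 H2 Hgt). lia. }
  destruct i as [|i], j as [|j]; [lia | | |].
  - destruct (Hr j) as [i' Hi']; [lia|].
    pose proof (Hanti _ _ _ _ Hij Hi' ltac:(lia)).
    replace i' with 0 in Hi' by lia. right; left; eauto.
  - destruct (Hl i) as [j' Hj']; [lia|].
    pose proof (Hm _ _ _ _ Hj' Hij ltac:(lia)).
    replace j' with 0 in Hj' by lia. left; eauto.
  - destruct (Hl i) as [j' Hj']; [lia|].
    pose proof (Hm _ _ _ _ Hj' Hij ltac:(lia)).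
    destruct (Nat.eq_dec j' (S j)) as [->|]; [left; eauto|].
    destruct (Nat.eq_dec j' j) as [->|]; [right; right; eauto|].
    destruct (Hr j) as [i' Hi']; [lia|].
    pose proof (Hanti _ _ _ _ Hij Hi' ltac:(lia)).
    pose proof (Hanti _ _ _ _ Hi' Hj' ltac:(lia)).
    destruct (Nat.eq_dec i' i) as [->|]; [right; right; eauto|].
    replace i' with (S i) in Hi' by lia. right; left; eauto.
Qed.

End Correspondences.

Section Distance.
Context {G : Group}.
Variable X : G -> Prop.
Implicit Types (g h p m q : list G).

Lemma dU_leP g h N : dU_le X g h N <->
  exists r Rel, r <= N /\ correspondence Rel (length g) (length h) /\
    forall i j, Rel i j -> Spow X r (gmul (ginv (nth i g gone)) (nth j h gone)).
Proof.
  unfold dU_le, correspondence. split.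
  - intros (r & Hr & Rel & Hb & Hl & Hrt & Hm & Hd). exists r, Rel. tauto.
  - intros (r & Rel & Hr & (Hb & Hl & Hrt & Hm) & Hd). exists r. split; [exact Hr|].
    exists Rel. tauto.
Qed.

Lemma dU_le_sym g h N : symmetric X -> dU_le X g h N -> dU_le X h g N.
Proof.
  intro Hsym. rewrite !dU_leP. intros (r & Rel & Hr & Hcor & Hd).
  exists r, (fun j i => Rel i j). split; [exact Hr|].
  split; [apply correspondence_flip, Hcor|].
  intros j i Hij. pose proof (Spow_inv X r _ Hsym (Hd i j Hij)) as Hinv.
  rewrite ginvM, ginvK in Hinv. exact Hinv.
Qed.

Local Ltac destruct_ltb :=
  repeat match goal with |- context [?a <? ?b] => destruct (Nat.ltb_spec a b) end.

Lemma dU_le_splice p m q : X gone -> p <> [] ->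
  (forall x, In x m -> X (gmul (ginv x) (last p gone))) ->
  dU_le X (p ++ m ++ q) (p ++ q) 1.
Proof.
  intros He Hp Hm. apply dU_leP.
  (* the points of the detour [m] are all matched with the last point of [p] *)
  set (f i := if i <? length p then i
              else if i <? length p + length m then length p - 1
              else i - length m).
  assert (Lp : 0 < length p) by (destruct p; [congruence | simpl; lia]).
  exists 1, (fun i j => i < length (p ++ m ++ q) /\ j = f i). split; [lia|].
  rewrite !length_app. split.
  - apply correspondence_graph; unfold f.
    + intros i Hi. destruct_ltb; lia.
    + intros j Hj. destruct (Nat.ltb_spec j (length p)).
      * exists j. destruct (Nat.ltb_spec j (length p)); [split; lia | lia].
      * exists (j + length m). destruct_ltb; split; lia.
    + intros i1 i2 H12 Hi2. destruct_ltb; lia.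
  - intros i j [Hi ->]. apply Spow_1. unfold f.
    destruct (Nat.ltb_spec i (length p)).
    { rewrite !app_nth1 by lia. rewrite gmul_Vl. exact He. }
    rewrite (app_nth2 p) by lia.
    destruct (Nat.ltb_spec i (length p + length m)).
    { rewrite app_nth1, app_nth1, <- last_nth by lia. apply Hm, nth_In. lia. }
    rewrite !app_nth2 by lia.
    replace (i - length m - length p) with (i - length p - length m) by lia.
    rewrite gmul_Vl. exact He.
Qed.

End Distance.

Section Contraction.
Context {G : Group}.
Variable S : G -> Prop.
Hypothesis HSsym : symmetric S.
Hypothesis HSe : S gone.

Inductive linked : list G -> list G -> Prop :=
| linked_refl c : closed_curve_at_e S c -> linked c c
| linked_step c d e : closed_curve_at_e S c -> dU_le S c d 1 -> linked d e -> linked c e.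

Lemma linked_closed_l c d : linked c d -> closed_curve_at_e S c.
Proof. destruct 1; assumption. Qed.

Lemma linked_closed_r c d : linked c d -> closed_curve_at_e S d.
Proof. induction 1; assumption. Qed.

Lemma linked_trans c d e : linked c d -> linked d e -> linked c e.
Proof. induction 1; intros; [assumption | eapply linked_step; eauto]. Qed.

Lemma linked_sym c d : linked c d -> linked d c.
Proof.
  induction 1 as [c Hc|c d e Hc Hcd _ IH]; [apply linked_refl, Hc|].
  apply linked_trans with d; [exact IH|].
  apply linked_step with c; [eapply linked_closed_r; eauto | apply dU_le_sym; auto | ].
  apply linked_refl, Hc.
Qed.

Lemma linked_contractible c : linked c [gone] -> contractible S 1 c.
Proof.
  intro H. remember [gone] as e eqn:He. revert He.
  induction H as [c Hc|c d e Hc Hcd Hde IH]; intros ->.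
  - exists []. split; [intros c' []|]. split; [intros k Hk; simpl in Hk; lia | reflexivity].
  - destruct (IH eq_refl) as (cs & Hcs & Hsteps & Hlast). exists (d :: cs). split; [|split].
    + intros c' [<-|Hc']; [eapply linked_closed_l; eauto | auto].
    + intros [|k] Hk; [exact Hcd|]. apply Hsteps. simpl in Hk. lia.
    + rewrite last_cons in Hlast. rewrite !last_cons. exact Hlast.
Qed.

Lemma short_loop_near_start p w : word_over S w -> eval w = gone -> length w <= 3 ->
  forall x, In x (trace p w) -> S (gmul (ginv x) p).
Proof.
  intros Hw Hev Hlen x Hx.
  assert (Hl : forall l, In l w -> S (eval_letter l) /\ S (ginv (eval_letter l)))
    by (intros l Hl; apply eval_letter_in; [exact HSsym | apply Hw, Hl]).
  destruct w as [|l1 [|l2 [|l3 [|]]]]; simpl in Hlen; try lia; simpl in Hx, Hev.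
  all: rewrite ?gmul_1r in Hev.
  - destruct Hx.
  - destruct Hx as [<-|[]]. rewrite ginv_mulV, Hev, ginv1. exact HSe.
  - pose proof (Hl l1 (or_introl eq_refl)) as [_ H1].
    destruct Hx as [<-|[<-|[]]]; rewrite <- ?gmul_assoc, ginv_mulV; [exact H1|].
    rewrite Hev, ginv1. exact HSe.
  - pose proof (Hl l1 (or_introl eq_refl)) as [_ H1].
    pose proof (Hl l3 (or_intror (or_intror (or_introl eq_refl)))) as [H3 _].
    destruct Hx as [<-|[<-|[<-|[]]]]; rewrite <- ?gmul_assoc, ginv_mulV; [exact H1| |].
    + rewrite gmul_assoc in Hev. apply ginv_unique in Hev. rewrite Hev, ginvK. exact H3.
    + rewrite Hev, ginv1. exact HSe.
Qed.

Lemma linked_insert u m v :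
  word_over S (u ++ v) -> eval (u ++ v) = gone ->
  word_over S m -> eval m = gone -> length m <= 3 ->
  linked (loop_of_word (u ++ m ++ v)) (loop_of_word (u ++ v)).
Proof.
  intros Huv Hev Hm Hem Hlen.
  assert (Hclosed : closed_curve_at_e S (loop_of_word (u ++ v)))
    by (apply loop_of_word_closed; assumption).
  apply linked_step with (loop_of_word (u ++ v)); [| |apply linked_refl, Hclosed].
  - apply loop_of_word_closed; [exact HSsym| |].
    + apply word_over_app in Huv as [Hu Hv].
      apply word_over_app. split; [|apply word_over_app]; auto.
    + rewrite !eval_app, Hem, gmul_1l. rewrite eval_app in Hev. exact Hev.
  - unfold loop_of_word. rewrite !trace_app, Hem, gmul_1r, gmul_1l, !app_comm_cons.
    apply dU_le_splice; [exact HSe | discriminate|].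
    rewrite last_cons, last_trace, gmul_1l.
    apply short_loop_near_start; assumption.
Qed.

Lemma wequiv_linked R u v : (forall r, R r -> triangles S r) ->
  wequiv S R u v -> word_over S u -> eval u = gone ->
  linked (loop_of_word u) (loop_of_word v).
Proof.
  intro HR.
  assert (Hsound : forall u v, wequiv S R u v ->
                     (word_over S u <-> word_over S v) /\ eval u = eval v)
    by (intros u' v'; apply wequiv_sound; intros r Hr; apply HR in Hr as (_ & ? & ?); auto).
  intros Huv Hu Hev. induction Huv as [w|u v Huv IH|u v w Huv IH1 Hvw IH2|u v x b Hx|u v r Hr].
  - apply linked_refl, loop_of_word_closed; assumption.
  - apply Hsound in Huv as [Hw He]. apply linked_sym, IH; [apply Hw, Hu | congruence].
  - pose proof (Hsound _ _ Huv) as [Hw He].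
    apply linked_trans with (loop_of_word v); [apply IH1 | apply IH2]; auto;
      [apply Hw, Hu | congruence].
  - pose proof (Hsound _ _ (weq_cancel u v b Hx)) as [Hw He].
    apply (linked_insert u [(x, b); (x, negb b)] v); [apply Hw, Hu | | | | simpl; lia].
    + etransitivity; [symmetry; apply He | apply Hev].
    + intros l [<-|[<-|[]]]; exact Hx.
    + destruct b; unfold eval, eval_letter; simpl; rewrite gmul_1r; [apply gmul_Vl | apply gmul_Vr].
  - pose proof (Hsound _ _ (weq_rel u v Hr)) as [Hw He].
    destruct (HR r Hr) as (Hlen & Hrw & Hre).
    apply linked_insert; [apply Hw, Hu | congruence | exact Hrw | exact Hre | lia].
Qed.

Lemma determining_contractible : determining S ->
  forall c, closed_curve_at_e S c -> contractible S 1 c.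
Proof.
  intros (_ & _ & R & HRlen & _ & HRsound & Hpres) c Hc.
  assert (HR : forall r, R r -> triangles S r)
    by (intros r Hr; split; [apply HRlen, Hr | apply HRsound, Hr]).
  destruct Hc as (Hcurve & H0 & Hlast). destruct c as [|a q]; [destruct Hcurve; congruence|].
  simpl in H0. subst a. apply is_curve_path_in in Hcurve.
  assert (Hw : word_over S (increments gone q)) by (apply word_over_increments, Hcurve).
  assert (Hev : eval (increments gone q) = gone)
    by (rewrite eval_increments, ginv1, gmul_1l, <- (last_cons gone); exact Hlast).
  pose proof (wequiv_linked R _ [] HR (Hpres _ Hw Hev) Hw Hev) as Hlinked.
  unfold loop_of_word in Hlinked. rewrite trace_increments in Hlinked.
  apply linked_contractible, Hlinked.
Qed.

End Contraction.

Section Determining.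
Context {G : Group}.
Variables (S : G -> Prop) (N : nat).
Hypothesis HSsym : symmetric S.
Hypothesis HSe : S gone.

Local Notation X := (Spow S (Datatypes.S N)).

Lemma Spow_succ_of_S x : S x -> X x.
Proof. intro Hx. apply (Spow_le S HSe 1); [lia | apply Spow_1, Hx]. Qed.

Lemma Spow_succ_of_Spow x : Spow S N x -> X x.
Proof. apply Spow_le; [exact HSe | lia]. Qed.

Lemma wequiv_snoc_triangle u a b c :
  X (gmul (ginv a) b) -> X (gmul (ginv b) c) -> X (gmul (ginv a) c) ->
  wequiv X (triangles X) ((u ++ [step a b]) ++ [step b c]) (u ++ [step a c]).
Proof.
  intros. rewrite <- app_assoc. apply wequiv_app; [apply weq_refl|].
  apply wequiv_triangle; auto. apply gmul_telescope.
Qed.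

Lemma letter_path k x a : k <= Datatypes.S N -> Spow S k x ->
  exists q, path_in S a q /\ last q a = gmul a x /\
    wequiv X (triangles X) [(x, false)] (increments a q).
Proof.
  revert x a. induction k as [|k IH]; intros x a Hk Hx.
  - simpl in Hx. subst x. exists []. split; [exact I|]. split; [symmetry; apply gmul_1r|].
    apply wequiv_gone, Spow_gone, HSe.
  - destruct Hx as (s & y & Hs & Hy & ->).
    destruct (IH y (gmul a s) ltac:(lia) Hy) as (q & Hq & Hlast & Hw).
    exists (gmul a s :: q). split; [|split].
    + split; [rewrite gmulK; exact Hs | exact Hq].
    + rewrite last_cons, Hlast. symmetry. apply gmul_assoc.
    + simpl increments. unfold step at 1. rewrite gmulK.
      apply weq_trans with ([(s, false)] ++ [(y, false)]).
      * apply weq_sym, wequiv_triangle; [apply Spow_succ_of_S, Hs | | | reflexivity].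
        -- apply (Spow_le S HSe k); [lia | exact Hy].
        -- apply (Spow_le S HSe (Datatypes.S k)); [lia | exists s, y; auto].
      * apply (wequiv_app _ _ [_] [_]); [apply weq_refl | exact Hw].
Qed.

Lemma word_path w a : word_over X w ->
  exists q, path_in S a q /\ last q a = gmul a (eval w) /\
    wequiv X (triangles X) w (increments a q).
Proof.
  revert a. induction w as [|l w IH]; intros a Hw.
  - exists []. split; [exact I|]. split; [symmetry; apply gmul_1r | apply weq_refl].
  - apply word_over_cons in Hw as [Hl Hw].
    assert (Hletter : exists q, path_in S a q /\ last q a = gmul a (eval_letter l) /\
              wequiv X (triangles X) [l] (increments a q)).
    { destruct l as [x []]; cbn [fst] in Hl; unfold eval_letter; cbn [snd].
      - pose proof (Spow_inv S _ _ HSsym Hl) as Hxi.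
        destruct (letter_path _ (ginv x) a (le_n _) Hxi) as (q & Hq & Hlast & Hwq).
        exists q. split; [exact Hq|]. split; [exact Hlast|].
        apply weq_trans with [(ginv x, false)]; [|exact Hwq].
        apply wequiv_inv_letter; [apply Spow_gone, HSe | exact Hl | exact Hxi].
      - apply (letter_path _ x a (le_n _) Hl). }
    destruct Hletter as (q1 & Hq1 & Hlast1 & Hw1).
    destruct (IH (gmul a (eval_letter l)) Hw) as (q2 & Hq2 & Hlast2 & Hw2).
    exists (q1 ++ q2). split; [|split].
    + apply path_in_app; [exact Hq1 | rewrite Hlast1; exact Hq2].
    + rewrite last_app, Hlast1, Hlast2. symmetry. apply gmul_assoc.
    + rewrite increments_app, Hlast1. apply (wequiv_app _ _ [l] _ w); assumption.
Qed.

Lemma ladder_prefix a p q Rel :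
  path_in S a p -> path_in S a q ->
  correspondence Rel (Datatypes.S (length p)) (Datatypes.S (length q)) ->
  (forall i j, Rel i j -> Spow S N (gmul (ginv (nth i (a :: p) gone)) (nth j (a :: q) gone))) ->
  forall i j, Rel i j ->
    wequiv X (triangles X)
      (firstn i (increments a p) ++ [step (nth i (a :: p) gone) (nth j (a :: q) gone)])
      (firstn j (increments a q)).
Proof.
  intros Hp Hq Hcor Hnear i j Hij. rewrite path_in_nth in Hp, Hq.
  remember (i + j) as s eqn:Hs. revert i j Hs Hij.
  induction s as [s IH] using lt_wf_ind. intros i j -> Hij.
  pose proof (proj1 Hcor _ _ Hij) as [Hi Hj].
  destruct (Nat.eq_dec (i + j) 0) as [H0|Hpos].
  { assert (i = 0) as -> by lia. assert (j = 0) as -> by lia.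
    unfold step. rewrite gmul_Vl. apply wequiv_gone, Spow_gone, HSe. }
  destruct (correspondence_pred _ _ _ _ _ Hcor Hij ltac:(lia))
    as [(i' & -> & Hij')|[(j' & -> & Hij')|(i' & j' & -> & -> & Hij')]].
  - rewrite firstn_increments_S by lia.
    eapply weq_trans; [|exact (IH (i' + j) ltac:(lia) i' j eq_refl Hij')].
    apply wequiv_snoc_triangle; [apply Spow_succ_of_S, Hp; lia | apply Spow_succ_of_Spow, Hnear, Hij
                                | apply Spow_succ_of_Spow, Hnear, Hij'].
  - rewrite firstn_increments_S by lia.
    eapply weq_trans; [apply weq_sym, wequiv_snoc_triangle|].
    + apply Spow_succ_of_Spow, Hnear, Hij'.
    + apply Spow_succ_of_S, Hq. lia.
    + apply Spow_succ_of_Spow, Hnear, Hij.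
    + apply wequiv_app; [exact (IH (i + j') ltac:(lia) i j' eq_refl Hij') | apply weq_refl].
  - rewrite !firstn_increments_S by lia.
    (* the diagonal rung factors through c_(i'+1), hence lies in S * S^N *)
    assert (Hdiag : X (gmul (ginv (nth i' (a :: p) gone)) (nth (Datatypes.S j') (a :: q) gone))).
    { rewrite <- (gmul_telescope _ (nth (Datatypes.S i') (a :: p) gone)).
      eexists (gmul (ginv (nth i' (a :: p) gone)) _), _.
      split; [apply Hp; lia | split; [apply Hnear, Hij | reflexivity]]. }
    eapply weq_trans; [apply wequiv_snoc_triangle|].
    + apply Spow_succ_of_S, Hp. lia.
    + apply Spow_succ_of_Spow, Hnear, Hij.
    + exact Hdiag.
    + eapply weq_trans; [apply weq_sym, wequiv_snoc_triangle|].
      * apply Spow_succ_of_Spow, Hnear, Hij'.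
      * apply Spow_succ_of_S, Hq. lia.
      * exact Hdiag.
      * apply wequiv_app; [exact (IH (i' + j') ltac:(lia) i' j' eq_refl Hij') | apply weq_refl].
Qed.

Lemma ladder_wequiv c d :
  closed_curve_at_e S c -> closed_curve_at_e S d -> dU_le S c d N ->
  wequiv X (triangles X) (curve_word c) (curve_word d).
Proof.
  intros (Hc & Hc0 & Hcl) (Hd & Hd0 & Hdl) Hcd.
  destruct c as [|a p]; [destruct Hc; congruence|].
  destruct d as [|b q]; [destruct Hd; congruence|].
  simpl in Hc0, Hd0. subst a b. rewrite last_cons in Hcl, Hdl.
  apply is_curve_path_in in Hc, Hd.
  apply dU_leP in Hcd as (r & Rel & Hr & Hcor & Hnear).
  pose proof (correspondence_last Rel (length p) (length q) Hcor) as Hend.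
  pose proof (ladder_prefix gone p q Rel Hc Hd Hcor
    (fun i j Hij => Spow_le S HSe r N _ Hr (Hnear i j Hij)) _ _ Hend) as Hladder.
  rewrite !firstn_all2 in Hladder by (rewrite length_increments; lia).
  rewrite !nth_length_cons, Hcl, Hdl in Hladder.
  unfold step in Hladder. rewrite gmul_Vl in Hladder.
  pose proof (wequiv_app _ _ _ _ _ _ (weq_refl (increments gone p))
                (wequiv_gone X (Spow_gone S HSe _))) as Hdrop.
  rewrite app_nil_r in Hdrop.
  exact (weq_trans _ (weq_sym Hdrop) Hladder).
Qed.

Lemma contractible_wequiv c : closed_curve_at_e S c -> contractible S N c ->
  wequiv X (triangles X) (curve_word c) [].
Proof.
  intros Hc (cs & Hcs & Hsteps & Hlast). revert c Hc Hsteps Hlast.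
  induction cs as [|c' cs IH]; intros c Hc Hsteps Hlast.
  - simpl in Hlast. subst c. apply weq_refl.
  - assert (Hc' : closed_curve_at_e S c') by (apply Hcs; left; reflexivity).
    apply weq_trans with (curve_word c').
    + apply ladder_wequiv; [exact Hc | exact Hc' | apply (Hsteps 0); simpl; lia].
    + apply IH; [intros c'' H; apply Hcs; right; exact H | exact Hc'
                | intros k Hk; apply (Hsteps (Datatypes.S k)); simpl; lia | exact Hlast].
Qed.

Lemma contractible_determining : generates S ->
  (forall c, closed_curve_at_e S c -> contractible S N c) -> determining (Spow S (N + 1)).
Proof.
  intros HSgen Hcontr. rewrite Nat.add_1_r.
  assert (Hgen : generates X).
  { intro g. destruct (HSgen g) as (w & Hw & Hev). exists w. split; [|exact Hev].
    intros l Hl. apply Spow_succ_of_S, Hw, Hl. }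
  split; [apply Spow_gone, HSe|]. split; [exact Hgen|].
  exists (triangles X). split; [intros r Hr; apply Hr|].
  split; [exact Hgen|]. split; [intros r (_ & Hw & Hev); auto|].
  intros w Hw Hev.
  destruct (word_path w gone Hw) as (q & Hq & Hlast & Hwq).
  rewrite Hev, gmul_1r in Hlast.
  assert (Hc : closed_curve_at_e S (gone :: q)).
  { split; [apply is_curve_path_in, Hq|]. split; [reflexivity|]. rewrite last_cons. exact Hlast. }
  exact (weq_trans _ Hwq (contractible_wequiv _ Hc (Hcontr _ Hc))).
Qed.

End Determining.

Theorem mainTheorem15 (G : Group) (S : G -> Prop)
  (HSsym : symmetric S) (HSe : S gone) (HSgen : generates S) :
  (determining S ->
     forall c0, closed_curve_at_e S c0 -> contractible S 1 c0) /\
  (forall N : nat,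
     (forall c0, closed_curve_at_e S c0 -> contractible S N c0) ->
     determining (Spow S (N + 1))).
Proof.
  split.
  - apply determining_contractible; assumption.
  - intro N. apply contractible_determining; assumption.
Qed.
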